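(* Fix a $C^0$-concept over $\mathbb{K}$. Let $E,F\in\mathcal{M}$, $U\subseteq E$ open, $k\ge2$, $f\colon U\to F$ of class $C^k$, and let $f(x+th)=\sum_{j=0}^kt^ja_j(x,h)+t^kR_{k+1}(x,h,t)$ ($(x,h,t)\in U^{[1]}$) be the unique expansion with $a_j\colon U\times E\to F$ of class $C^{k-j}$ and $R_{k+1}\colon U^{[1]}\to F$ of class $C^0$ with $R_{k+1}(x,h,0)=0$. Then $a_0(x,h)=f(x)$ is constant in $h$, $a_1(x,h)=df(x)h$ is linear in $h$, and $a_2(x,\cdot)$ is an $F$-valued quadratic form with $$a_2(x,h_1+h_2)-a_2(x,h_1)-a_2(x,h_2)=d^2f(x)(h_1,h_2);$$ in particular $2a_2(x,h)=d^2f(x)(h,h)$.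
   Context: Let $\mathbb{K}$ be a commutative ring with unit carrying a topology. A $C^0$-concept over $\mathbb{K}$ consists of: (a) a class $\mathcal{M}$ of topologized $\mathbb{K}$-modules with $\mathbb{K}\in\mathcal{M}$; (b) for $E,F\in\mathcal{M}$ and open $U\subseteq E$, a set $C^0(U,F)$ of continuous maps; (c) for $E_1,E_2\in\mathcal{M}$ a topology on $E_1\times E_2$ (not necessarily the product topology) making it a member of $\mathcal{M}$; subject to: (I.1) composites of $C^0$-maps are $C^0$, identities and inclusions of open subsets are $C^0$; (I.2) $x\mapsto rx+b$ is $C^0$; (I.3) $t\mapsto tv+x$ is $C^0$; (I.4) $\mathbb{K}^\times$ is open and inversion is $C^0$; (I.5) $C^0$ is local on open covers; (II.1) projections and $v\mapsto(v,y)$, $w\mapsto(x,w)$ are $C^0$; (II.2) $f_1\times f_2$ is $C^0$ for $C^0$-maps $f_i$; (II.3) diagonals are $C^0$; (II.4) exchange/associativity maps of products are $C^0$ both ways; (II.5) addition and scalar multiplication are $C^0$; (III) a $C^0$-map on open $U\subseteq\mathbb{K}$ is determined by its values on $U\cap\mathbb{K}^\times$. For open $V\subseteq X$, $V^{[1]}=\{(x,v,t)\in V\times X\times\mathbb{K}:x+tv\in V\}$; a $C^0$-map $g$ is $C^1$ if there is a $C^0$-map $g^{[1]}$ on $V^{[1]}$ with $g(x+tv)-g(x)=t\,g^{[1]}(x,v,t)$, and $dg(x)v:=g^{[1]}(x,v,0)=:\partial_vg(x)$; recursively $g$ is $C^{k+1}$ if $C^k$ and $g^{[k]}$ is $C^1$,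 $g^{[k+1]}=(g^{[k]})^{[1]}$. For $f$ of class $C^2$, $d^2f(x)(v,w):=\partial_v\partial_wf(x)$. An $F$-valued quadratic form is a map $q\colon E\to F$ with $q(th)=t^2q(h)$ for all $t\in\mathbb{K}$ and $q(h_1+h_2)-q(h_1)-q(h_2)$ $\mathbb{K}$-bilinear in $(h_1,h_2)$. *)

From HB Require Import structures.
From mathcomp Require Import all_boot all_algebra.
From Stdlib Require Import ClassicalEpsilon.
Set Implicit Arguments. Unset Strict Implicit. Unset Printing Implicit Defensive.
Import GRing.Theory.
Local Open Scope ring_scope.

Definition pset (T : Type) := T -> Prop.

Record Mod (K : comPzRingType) := MkMod {
  car :> lmodType K ;
  opn : pset (pset car) }.
Arguments MkMod {K}.
Arguments opn {K}.

Definition is_topology (T : Type) (O : pset (pset T)) : Prop :=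
  [/\ O (fun _ => True), O (fun _ => False),
      (forall (I : Type) (A : I -> pset T), (forall i, O (A i)) ->
          O (fun x => exists i, A i x)) &
      (forall A B, O A -> O B -> O (fun x => A x /\ B x))].

Section Concept.
Variable K : comPzRingType.
Variable topK : pset (pset K).

Definition Kmod : Mod K := MkMod K^o topK.

Definition Kunit (t : K) : Prop := exists s : K, t * s = 1.
Definition invK (t : K) : K :=
  epsilon (inhabits 0) (fun s : K => t * s = 1).

(* product topologies provided by a C^0-concept *)
Definition ProdTop := forall E1 E2 : Mod K, pset (pset (car E1 * car E2)%type).
Definition prodM (PT : ProdTop) (E1 E2 : Mod K) : Mod K :=
  MkMod [the lmodType K of (car E1 * car E2)%type] (PT E1 E2).

(* C^0(U,F) for U subset of E: maps are total functions car E -> car F,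
   only their values on U matter (see axiom c0_ext). *)
Definition C0Rel := forall E F : Mod K, pset (car E) -> (car E -> car F) -> Prop.

Definition continuous_on (E F : Mod K) (U : pset E) (f : E -> F) : Prop :=
  forall W, opn F W -> opn E (fun x => U x /\ W (f x)).

Definition is_C0_concept (inM : Mod K -> Prop) (PT : ProdTop) (C0 : C0Rel) : Prop :=
  let X := prodM PT in
  (forall E, inM E -> is_topology (opn E)) /\
  inM Kmod /\
  (forall E1 E2, inM E1 -> inM E2 -> inM (X E1 E2)) /\
  (forall E F U f, inM E -> inM F -> C0 E F U f -> opn E U) /\
  (forall E F U f, inM E -> inM F -> C0 E F U f -> continuous_on U f) /\
  (forall E F U f g, inM E -> inM F -> C0 E F U f ->
       (forall x, U x -> f x = g x) -> C0 E F U g) /\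
  (forall (E F G : Mod K) U V (f : E -> F) (g : F -> G), inM E -> inM F -> inM G ->
       C0 E F U f -> C0 F G V g -> (forall x, U x -> V (f x)) ->
       C0 E G U (fun x => g (f x))) /\
  (forall E U, inM E -> opn E U -> C0 E E U (fun x => x)) /\
  (forall (E : Mod K) (r : K) (b : E), inM E ->
       C0 E E (fun _ => True) (fun x => r *: x + b)) /\
  (forall (E : Mod K) (v x : E), inM E ->
       C0 Kmod E (fun _ => True) (fun t : K^o => (t : K) *: v + x)) /\
  opn Kmod Kunit /\ C0 Kmod Kmod Kunit invK /\
  (forall (E F : Mod K) (I : Type) (Ui : I -> pset E) (f : E -> F), inM E -> inM F ->
       (forall i, C0 E F (Ui i) f) -> C0 E F (fun x => exists i, Ui i x) f) /\
  (forall E1 E2, inM E1 -> inM E2 ->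
       C0 (X E1 E2) E1 (fun _ => True) (fun p => p.1) /\
       C0 (X E1 E2) E2 (fun _ => True) (fun p => p.2) /\
       (forall y : E2, C0 E1 (X E1 E2) (fun _ => True) (fun v => (v, y))) /\
       (forall x : E1, C0 E2 (X E1 E2) (fun _ => True) (fun w => (x, w)))) /\
  (forall (E1 E2 F1 F2 : Mod K) U1 U2 (f1 : E1 -> F1) (f2 : E2 -> F2),
       inM E1 -> inM E2 -> inM F1 -> inM F2 ->
       C0 E1 F1 U1 f1 -> C0 E2 F2 U2 f2 ->
       C0 (X E1 E2) (X F1 F2) (fun p => U1 p.1 /\ U2 p.2)
          (fun p => (f1 p.1, f2 p.2))) /\
  (forall E, inM E -> C0 E (X E E) (fun _ => True) (fun x => (x, x))) /\
  (forall E1 E2, inM E1 -> inM E2 ->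
       C0 (X E1 E2) (X E2 E1) (fun _ => True) (fun p => (p.2, p.1))) /\
  (forall E1 E2 E3, inM E1 -> inM E2 -> inM E3 ->
       C0 (X (X E1 E2) E3) (X E1 (X E2 E3)) (fun _ => True)
          (fun p => (p.1.1, (p.1.2, p.2))) /\
       C0 (X E1 (X E2 E3)) (X (X E1 E2) E3) (fun _ => True)
          (fun p => ((p.1, p.2.1), p.2.2))) /\
  (forall E, inM E ->
       C0 (X E E) E (fun _ => True) (fun p => p.1 + p.2) /\
       C0 (X Kmod E) E (fun _ => True) (fun p => (p.1 : K) *: p.2)) /\
  (* (III) *)
  (forall (F : Mod K) U (f g : Kmod -> F), inM F ->
       C0 Kmod F U f -> C0 Kmod F U g ->
       (forall t, U t -> Kunit t -> f t = g t) -> forall t, U t -> f t = g t).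

End Concept.

Record C0concept (K : comPzRingType) (topK : pset (pset K)) := {
  inM : Mod K -> Prop ;
  prodT : ProdTop K ;
  isC0 : C0Rel K ;
  C0concept_ax : is_C0_concept topK inM prodT isC0 }.
Arguments inM {K topK}.
Arguments prodT {K topK}.
Arguments isC0 {K topK}.

Section Diff.
Variables (K : comPzRingType) (topK : pset (pset K)) (c : C0concept topK).

Definition pM (E1 E2 : Mod K) : Mod K := prodM (prodT c) E1 E2.

Definition M1 (X : Mod K) : Mod K := pM X (pM X (Kmod topK)).

Definition setV1 (X : Mod K) (V : pset X) : pset (M1 X) :=
  fun p => V p.1 /\ V (p.1 + (p.2.2 : K) *: p.2.1).

Definition is_dq (X F : Mod K) (V : pset X) (g : X -> F) (g1 : M1 X -> F) : Prop :=
  isC0 c (M1 X) F (setV1 V) g1 /\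
  forall p : M1 X, setV1 V p ->
    g (p.1 + (p.2.2 : K) *: p.2.1) - g p.1 = (p.2.2 : K) *: g1 p.

(* g is C^k on V: g is C^0 and (for k > 0) some g^[1] is C^(k-1) on V^[1];
   iterating, this is: g^[0] = g, ..., g^[k] all exist and are C^0. *)
Fixpoint isCk (k : nat) (X F : Mod K) (V : pset X) (g : X -> F) {struct k} : Prop :=
  isC0 c X F V g /\
  match k with
  | 0 => True
  | k'.+1 => exists g1 : M1 X -> F, is_dq V g g1 /\ isCk k' (setV1 V) g1
  end.

(* the (unique, when it exists) map g^[1] *)
Definition dq (X F : Mod K) (V : pset X) (g : X -> F) : M1 X -> F :=
  epsilon (inhabits (fun _ => 0)) (fun g1 => is_dq V g g1).

Definition dd (X F : Mod K) (V : pset X) (g : X -> F) (x v : X) : F :=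
  dq V g (x, (v, (0 : K^o))).

Definition dd2 (X F : Mod K) (V : pset X) (f : X -> F) (x v w : X) : F :=
  dd V (fun y => dd V f y w) x v.

End Diff.
Arguments setV1 {K topK} c {X} V _.
Arguments is_dq {K topK} c {X F} V g g1.
Arguments dq {K topK} c {X F} V g _.


Definition is_linear (K : comPzRingType) (E F : lmodType K) (l : E -> F) : Prop :=
  forall (r : K) (h1 h2 : E), l (r *: h1 + h2) = r *: l h1 + l h2.

Definition is_bilinear (K : comPzRingType) (E F : lmodType K) (B : E -> E -> F) : Prop :=
  (forall h2, is_linear (fun h1 => B h1 h2)) /\ (forall h1, is_linear (B h1)).

Definition is_quadratic_form (K : comPzRingType) (E F : lmodType K) (q : E -> F) : Prop :=
  (forall (t : K) (h : E), q (t *: h) = (t ^+ 2) *: q h) /\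
  is_bilinear (fun h1 h2 => q (h1 + h2) - q h1 - q h2).

(* Write f(x + t h) = a_0(x,h) + t a_1(x,h) + t^2 Q(x,h,t) with Q(x,h,0) = a_2(x,h).
   Every identity is first proved for units t, where one may cancel powers of t, by
   substituting this expansion into difference-quotient relations; both sides are C^0 in t
   on an open set containing 0, so axiom (III) carries the identity to t = 0.
   This gives a_1(x,h) = f^[1](x,h,0), then Q(x,rh,t) = r^2 Q(x,h,rt) (homogeneity of a_2),
   and, expanding f(x + t(h_1+h_2)) around the point x + t h_1,
   Q(x,h_1+h_2,t) = Q(x,h_1,t) + G(x,h_1,t) + Q(x+th_1,h_2,t), where G is the difference
   quotient of y |-> a_1(y,h_2) = df(y)h_2; at t = 0 this is the polarization identity. *)

From HB Require Import structures.
From mathcomp Require Import all_boot all_algebra.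
From Stdlib Require Import ClassicalEpsilon FunctionalExtensionality PropExtensionality.
Import GRing.Theory.
Local Open Scope ring_scope.
Set Implicit Arguments. Unset Strict Implicit.

Lemma unit_scaleI (K : comPzRingType) (V : lmodType K) (t : K) (v w : V) :
  Kunit t -> t *: v = t *: w -> v = w.
Proof.
move=> [s ts1] e.
have : s *: (t *: v) = s *: (t *: w) by rewrite e.
by rewrite !scalerA mulrC ts1 !scale1r.
Qed.

Section LinearMaps.
Variables (K : comPzRingType) (E F : lmodType K) (l : E -> F).
Hypothesis l_linear : is_linear l.

Lemma is_linear0 : l 0 = 0.
Proof.
have := l_linear 1 0 0; rewrite !scale1r addr0 => l0.
by apply: (addrI (l 0)); rewrite addr0 -l0.
Qed.

Lemma is_linearZ (r : K) (h : E) : l (r *: h) = r *: l h.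
Proof. by have := l_linear r h 0; rewrite !addr0 is_linear0 addr0. Qed.

Lemma is_linearD (h1 h2 : E) : l (h1 + h2) = l h1 + l h2.
Proof. by have := l_linear 1 h1 h2; rewrite !scale1r. Qed.

End LinearMaps.

Definition polar (K : comPzRingType) (E F : lmodType K) (q : E -> F) (h1 h2 : E) : F :=
  q (h1 + h2) - q h1 - q h2.

Lemma polarC (K : comPzRingType) (E F : lmodType K) (q : E -> F) (h1 h2 : E) :
  polar q h1 h2 = polar q h2 h1.
Proof. by rewrite /polar [h1 + h2]addrC addrAC. Qed.

Lemma polar_diag (K : comPzRingType) (E F : lmodType K) (q : E -> F) (h : E) :
  (forall (t : K) (v : E), q (t *: v) = t ^+ 2 *: q v) -> polar q h h = q h *+ 2.
Proof.
move=> hom; rewrite /polar; have -> : h + h = (1 + 1 : K) *: h by rewrite scalerDl scale1r.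
by rewrite hom expr2 mulrDl mul1r !scalerDl !scale1r addrA !addrK mulr2n.
Qed.

Lemma is_quadratic_formP (K : comPzRingType) (E F : lmodType K) (q : E -> F) :
  (forall (t : K) (v : E), q (t *: v) = t ^+ 2 *: q v) ->
  (forall h2, is_linear (fun h1 => polar q h1 h2)) -> is_quadratic_form q.
Proof.
move=> hom lin; split=> //; split=> [h2|h1 r u v]; first exact: lin.
by have /= := lin h1 r u v; rewrite !(polarC q _ h1).
Qed.

Section Concept.
Variables (K : comPzRingType) (topK : pset (pset K)) (c : C0concept topK).
Notation C0 := (isC0 c).
Notation KM := (Kmod topK).
Notation X := (pM c).

Ltac C0_axioms := have := C0concept_ax c; rewrite /is_C0_concept; cbv zeta;
  move=> [ax_top [ax_K [ax_prod [ax_open [ax_cont [ax_ext [ax_comp [ax_id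
          [_ [ax_line [_ [_ [_ [ax_proj [ax_prodmap [ax_diag [_ [_ [ax_ops ax_III]]]]]]]]]]]]]]]]]]].

Lemma inM_K : inM c KM. Proof. by C0_axioms. Qed.

Lemma inM_X (E1 E2 : Mod K) : inM c E1 -> inM c E2 -> inM c (X E1 E2).
Proof. by C0_axioms; apply: ax_prod. Qed.

Lemma open_inter (A : Mod K) (P Q : pset A) :
  inM c A -> opn A P -> opn A Q -> opn A (fun x => P x /\ Q x).
Proof. by C0_axioms => hA; case: (ax_top _ hA) => _ _ _; apply. Qed.

Lemma c0_open (A B : Mod K) V (g : A -> B) : inM c A -> inM c B -> C0 A B V g -> opn A V.
Proof. by C0_axioms; apply: ax_open. Qed.

Lemma c0_cont (A B : Mod K) V (g : A -> B) :
  inM c A -> inM c B -> C0 A B V g -> continuous_on V g.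
Proof. by C0_axioms; apply: ax_cont. Qed.

Lemma c0_ext (A B : Mod K) V (g g' : A -> B) : inM c A -> inM c B -> C0 A B V g ->
  (forall x, V x -> g x = g' x) -> C0 A B V g'.
Proof. by C0_axioms; apply: ax_ext. Qed.

Lemma c0_comp (A B C : Mod K) V W (g : A -> B) (h : B -> C) :
  inM c A -> inM c B -> inM c C -> C0 A B V g -> C0 B C W h ->
  (forall x, V x -> W (g x)) -> C0 A C V (fun x => h (g x)).
Proof. by C0_axioms; apply: ax_comp. Qed.

Lemma c0_id (A : Mod K) V : inM c A -> opn A V -> C0 A A V (fun x => x).
Proof. by C0_axioms; apply: ax_id. Qed.

Lemma c0_line (A : Mod K) (v x : A) :
  inM c A -> C0 KM A (fun _ => True) (fun t : KM => (t : K) *: v + x).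
Proof. by C0_axioms; apply: ax_line. Qed.

Lemma c0_fst (A B : Mod K) :
  inM c A -> inM c B -> C0 (X A B) A (fun _ => True) (fun p => p.1).
Proof. by C0_axioms => hA hB; case: (ax_proj _ _ hA hB). Qed.

Lemma c0_snd (A B : Mod K) :
  inM c A -> inM c B -> C0 (X A B) B (fun _ => True) (fun p => p.2).
Proof. by C0_axioms => hA hB; case: (ax_proj _ _ hA hB) => _ []. Qed.

Lemma c0_pairl (A B : Mod K) (y : B) :
  inM c A -> inM c B -> C0 A (X A B) (fun _ => True) (fun v => (v, y)).
Proof. by C0_axioms => hA hB; case: (ax_proj _ _ hA hB) => _ [_ []]. Qed.

Lemma c0_prod (A1 A2 B1 B2 : Mod K) V1 V2 (g1 : A1 -> B1) (g2 : A2 -> B2) :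
  inM c A1 -> inM c A2 -> inM c B1 -> inM c B2 -> C0 A1 B1 V1 g1 -> C0 A2 B2 V2 g2 ->
  C0 (X A1 A2) (X B1 B2) (fun p => V1 p.1 /\ V2 p.2) (fun p => (g1 p.1, g2 p.2)).
Proof. by C0_axioms; apply: ax_prodmap. Qed.

Lemma c0_diag (A : Mod K) : inM c A -> C0 A (X A A) (fun _ => True) (fun x => (x, x)).
Proof. by C0_axioms; apply: ax_diag. Qed.

Lemma c0_addop (A : Mod K) : inM c A -> C0 (X A A) A (fun _ => True) (fun p => p.1 + p.2).
Proof. by C0_axioms => hA; case: (ax_ops _ hA). Qed.

Lemma c0_scaleop (A : Mod K) :
  inM c A -> C0 (X KM A) A (fun _ => True) (fun p => (p.1 : K) *: p.2).
Proof. by C0_axioms => hA; case: (ax_ops _ hA). Qed.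

Lemma c0_units_eq (B : Mod K) V (g h : KM -> B) : inM c B -> C0 KM B V g -> C0 KM B V h ->
  (forall t, V t -> Kunit t -> g t = h t) -> forall t, V t -> g t = h t.
Proof. by C0_axioms; apply: ax_III. Qed.

Lemma c0_restr (A B : Mod K) (V W : pset A) (g : A -> B) :
  inM c A -> inM c B -> opn A V -> (forall x, V x -> W x) -> C0 A B W g -> C0 A B V g.
Proof. by move=> hA hB oV VW cg; apply: (c0_comp hA hA hB (c0_id hA oV) cg VW). Qed.

Lemma c0_pair (A B1 B2 : Mod K) V (g1 : A -> B1) (g2 : A -> B2) :
  inM c A -> inM c B1 -> inM c B2 -> C0 A B1 V g1 -> C0 A B2 V g2 ->
  C0 A (X B1 B2) V (fun x => (g1 x, g2 x)).
Proof.
move=> hA h1 h2 c1 c2; have hAA := inM_X hA hA.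
have cdiag := c0_restr hA hAA (c0_open hA h1 c1) (fun _ _ => I) (c0_diag hA).
exact: (c0_comp hA hAA (inM_X h1 h2) cdiag (c0_prod hA hA h1 h2 c1 c2)).
Qed.

Lemma c0_add (A B : Mod K) V (g h : A -> B) : inM c A -> inM c B ->
  C0 A B V g -> C0 A B V h -> C0 A B V (fun x => g x + h x).
Proof.
move=> hA hB cg ch.
exact: (c0_comp hA (inM_X hB hB) hB (c0_pair hA hB hB cg ch) (c0_addop hB)).
Qed.

Lemma c0_scale (A B : Mod K) V (s : A -> KM) (g : A -> B) : inM c A -> inM c B ->
  C0 A KM V s -> C0 A B V g -> C0 A B V (fun x => (s x : K) *: g x).
Proof.
move=> hA hB cs cg.
exact: (c0_comp hA (inM_X inM_K hB) hB (c0_pair hA inM_K hB cs cg) (c0_scaleop hB)).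
Qed.

Lemma c0_const (A B : Mod K) V (b : B) : inM c A -> inM c B -> opn A V ->
  C0 A B V (fun _ => b).
Proof.
move=> hA hB oV; apply: (c0_restr hA hB oV (fun _ _ => I)).
exact: (c0_comp hA (inM_X hA hB) hB (c0_pairl b hA hB) (c0_snd hA hB)).
Qed.

Lemma c0_sum (A B : Mod K) V n (g : 'I_n -> A -> B) : inM c A -> inM c B -> opn A V ->
  (forall i, C0 A B V (g i)) -> C0 A B V (fun x => \sum_(i < n) g i x).
Proof.
move=> hA hB oV; elim: n g => [|n IH] g cg.
  by apply: (c0_ext hA hB (c0_const 0 hA hB oV)) => x _; rewrite big_ord0.
have cS := c0_add hA hB (IH (fun i => g (widen_ord (leqnSn n) i)) (fun i => cg _)) (cg ord_max).
by apply: (c0_ext hA hB cS) => x _; rewrite big_ord_recr.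
Qed.

Lemma c0_exp (A : Mod K) V (s : A -> KM) n : inM c A -> opn A V -> C0 A KM V s ->
  C0 A KM V (fun x => ((s x : K) ^+ n : K^o)).
Proof.
move=> hA oV cs; elim: n => [|n IH].
  by apply: (c0_ext hA inM_K (@c0_const A KM V 1 hA inM_K oV)) => x _; rewrite expr0.
by apply: (c0_ext hA inM_K (c0_scale hA inM_K cs IH)) => x _; rewrite exprS.
Qed.

Lemma c0_open_preimage (A B : Mod K) (g : A -> B) (W : pset B) :
  inM c A -> inM c B -> C0 A B (fun _ => True) g -> opn B W -> opn A (fun x => W (g x)).
Proof.
move=> hA hB cg oW; have := c0_cont hA hB cg oW.
congr (opn A _); apply: functional_extensionality => x.
by apply: propositional_extensionality; tauto.
Qed.

Lemma open_line (A : Mod K) (V : pset A) (v x : A) : inM c A -> opn A V ->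
  opn KM (fun t : KM => V ((t : K) *: v + x)).
Proof. by move=> hA; apply: (c0_open_preimage inM_K hA (c0_line v x hA)). Qed.

Lemma open_setV1 (A : Mod K) (V : pset A) : inM c A -> opn A V -> opn (M1 c A) (setV1 c V).
Proof.
move=> hA oV; have hAK := inM_X hA inM_K; have hM := inM_X hA hAK.
have c21 := c0_comp hM hAK hA (c0_snd hA hAK) (c0_fst hA inM_K) (fun _ _ => I).
have c22 := c0_comp hM hAK inM_K (c0_snd hA hAK) (c0_snd hA inM_K) (fun _ _ => I).
have cshift := c0_add hM hA (c0_fst hA hAK) (c0_scale hM hA c22 c21).
exact: open_inter hM (c0_open_preimage hM hA (c0_fst hA hAK) oV)
                     (c0_open_preimage hM hA cshift oV).
Qed.

Lemma eq0_of_units (B : Mod K) (V : pset KM) (g h : KM -> B) :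
  inM c B -> C0 KM B V g -> C0 KM B V h -> V 0 ->
  (forall t, V t -> Kunit t -> (t : K) *: g t = (t : K) *: h t) -> g 0 = h 0.
Proof.
move=> hB cg ch V0 eq_units.
apply: (c0_units_eq hB cg ch) => // t Vt ut.
exact: unit_scaleI ut (eq_units t Vt ut).
Qed.

Lemma c0_curve (E F : Mod K) W (H : M1 c E -> F) V (phi psi : KM -> E) (chi : KM -> KM) :
  inM c E -> inM c F -> C0 (M1 c E) F W H ->
  C0 KM E V phi -> C0 KM E V psi -> C0 KM KM V chi ->
  (forall t, V t -> W (phi t, (psi t, chi t))) ->
  C0 KM F V (fun t => H (phi t, (psi t, chi t))).
Proof.
move=> hE hF cH c1 c2 c3; have hEK := inM_X hE inM_K.
have c23 := c0_pair inM_K hE inM_K c2 c3.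
exact: (c0_comp inM_K (inM_X hE hEK) hF (c0_pair inM_K hE hEK c1 c23) cH).
Qed.

Lemma c0_curve2 (E F : Mod K) W (H : X E E -> F) V (phi psi : KM -> E) :
  inM c E -> inM c F -> C0 (X E E) F W H -> C0 KM E V phi -> C0 KM E V psi ->
  (forall t, V t -> W (phi t, psi t)) -> C0 KM F V (fun t => H (phi t, psi t)).
Proof.
move=> hE hF cH c1 c2.
exact: (c0_comp inM_K (inM_X hE hE) hF (c0_pair inM_K hE hE c1 c2) cH).
Qed.

Lemma isCk_C0 n (A B : Mod K) (V : pset A) (g : A -> B) : isCk c n V g -> C0 A B V g.
Proof. by case: n => [|n] []. Qed.

Section DifferenceQuotient.
Variables (E F : Mod K) (hE : inM c E) (hF : inM c F) (U : pset E) (oU : opn E U).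

Lemma dq_spec (g : E -> F) : (exists g1, is_dq c U g g1) -> is_dq c U g (dq c U g).
Proof. exact: epsilon_spec. Qed.

Lemma is_dq_ext (g g' : E -> F) g1 : (forall y, U y -> g y = g' y) ->
  is_dq c U g g1 -> is_dq c U g' g1.
Proof. by move=> eq_gg' [cg1 dg1]; split=> // p [Up Uq]; rewrite -!eq_gg' //; apply: dg1. Qed.

Lemma dq_at0_unique (g : E -> F) g1 g1' x h : U x ->
  is_dq c U g g1 -> is_dq c U g g1' ->
  g1 (x, (h, (0 : K^o))) = g1' (x, (h, (0 : K^o))).
Proof.
move=> Ux [cg1 dg1] [cg1' dg1'].
pose V := fun t : KM => U ((t : K) *: h + x).
have oV : opn KM V := open_line h x hE oU.
have inV1 t : V t -> setV1 c U (x, (h, t)) by move=> Vt; split=> //=; rewrite addrC.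
have cx := c0_const x inM_K hE oV; have ch := c0_const h inM_K hE oV.
have ct := c0_id inM_K oV.
apply: (eq0_of_units hF (c0_curve hE hF cg1 cx ch ct inV1) (c0_curve hE hF cg1' cx ch ct inV1)).
  by rewrite /V scale0r add0r.
by move=> t Vt _; rewrite -(dg1 _ (inV1 t Vt)) -(dg1' _ (inV1 t Vt)).
Qed.

Lemma dq_at0_linear (g : E -> F) g1 x (r : K) h1 h2 : U x -> is_dq c U g g1 ->
  g1 (x, (r *: h1 + h2, (0 : K^o))) =
  r *: g1 (x, (h1, (0 : K^o))) + g1 (x, (h2, (0 : K^o))).
Proof.
move=> Ux [cg1 dg1].
pose V := fun t : KM => U ((t : K) *: h2 + x) /\ U ((t : K) *: (r *: h1 + h2) + x).
have oV : opn KM V := open_inter inM_K (open_line h2 x hE oU) (open_line _ x hE oU).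
have shift (t : K) : (t *: h2 + x) + (t * r) *: h1 = x + t *: (r *: h1 + h2).
  by rewrite scalerDr scalerA addrC addrA [RHS]addrC.
have inV_sum t : V t -> setV1 c U (x, (r *: h1 + h2, t)).
  by move=> Vt; split=> //=; rewrite addrC; exact: Vt.2.
have inV_h1 t : V t -> setV1 c U ((t : K) *: h2 + x, (h1, ((t : K) * r : K^o))).
  by move=> Vt; split=> /=; [exact: Vt.1 | rewrite shift addrC; exact: Vt.2].
have inV_h2 t : V t -> setV1 c U (x, (h2, t)).
  by move=> Vt; split=> //=; rewrite addrC; exact: Vt.1.
have cx := c0_const x inM_K hE oV; have ct := c0_id inM_K oV.
have cr := @c0_const KM KM V r inM_K inM_K oV.
have ctr : C0 KM KM V (fun t => ((t : K) * r : K^o)) := c0_scale inM_K inM_K ct cr.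
have cline := c0_restr inM_K hE oV (fun _ _ => I) (c0_line h2 x hE).
have cL := c0_curve hE hF cg1 cx (c0_const _ inM_K hE oV) ct inV_sum.
have cR1 := c0_curve hE hF cg1 cline (c0_const h1 inM_K hE oV) ctr inV_h1.
have cR2 := c0_curve hE hF cg1 cx (c0_const h2 inM_K hE oV) ct inV_h2.
have /= := eq0_of_units hF cL (c0_add inM_K hF (c0_scale inM_K hF cr cR1) cR2).
rewrite mul0r scale0r add0r; apply; first by rewrite /V !scale0r !add0r.
(* g(x + t(r h1 + h2)) - g x telescopes through the point x + t h2. *)
move=> t Vt _; rewrite scalerDr scalerA.
rewrite -(dg1 _ (inV_sum t Vt)) -(dg1 _ (inV_h1 t Vt)) -(dg1 _ (inV_h2 t Vt)) /=.
by rewrite shift (addrC _ x) addrA subrK.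
Qed.

Lemma is_dq_partial1 (G : X E E -> F) G1 h :
  is_dq c (fun p : X E E => U p.1) G G1 ->
  is_dq c U (fun y => G (y, h)) (fun p => G1 ((p.1, h), ((p.2.1, 0), p.2.2))).
Proof.
move=> [cG1 dG1].
have hEK := inM_X hE inM_K; have hM := inM_X hE hEK; have hEE := inM_X hE hE.
have hMEE := inM_X hEE (inM_X hEE inM_K).
pose Psi := fun p : M1 c E => (((p.1, h), ((p.2.1, 0), p.2.2)) : M1 c (X E E)).
have inV1 p : setV1 c U p -> setV1 c (fun q : X E E => U q.1) (Psi p).
  by case=> Up Uq; split.
split.
  have c1 := c0_comp hM hE hEE (c0_fst hE hEK) (c0_pairl h hE hE) (fun _ _ => I).
  have cv := c0_comp hEK hE hEE (c0_fst hE inM_K) (c0_pairl 0 hE hE) (fun _ _ => I).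
  have cvt := c0_pair hEK hEE inM_K cv (c0_snd hE inM_K).
  have c2 := c0_comp hM hEK (inM_X hEE inM_K) (c0_snd hE hEK) cvt (fun _ _ => I).
  have cPsi : C0 (M1 c E) (M1 c (X E E)) (setV1 c U) Psi :=
    c0_restr hM hMEE (open_setV1 hE oU) (fun _ _ => I) (c0_pair hM hEE (inM_X hEE inM_K) c1 c2).
  exact: (c0_comp hM hMEE hF cPsi cG1 inV1).
move=> p Vp; rewrite -(dG1 _ (inV1 p Vp)) /=.
by rewrite -[(p.1, h) + _]/(p.1 + p.2.2 *: p.2.1, h + p.2.2 *: 0) scaler0 addr0.
Qed.


Section SecondOrderExpansion.
Variables (m : nat) (f : E -> F) (hf : isCk c m.+2 U f).
Variables (a : nat -> X E E -> F) (R : M1 c E -> F).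
Hypothesis ha : forall j, (j <= m.+2)%N -> isCk c (m.+2 - j) (fun p : X E E => U p.1) (a j).
Hypothesis hR : C0 (M1 c E) F (setV1 c U) R.
Hypothesis hR0 : forall x h : E, U x -> R (x, (h, (0 : K^o))) = 0.
Hypothesis hexp : forall p : M1 c E, setV1 c U p ->
  f (p.1 + (p.2.2 : K) *: p.2.1) =
    \sum_(j < m.+3) ((p.2.2 : K) ^+ j) *: a j (p.1, p.2.1) + ((p.2.2 : K) ^+ m.+2) *: R p.

Definition tail2 (y h : E) (t : KM) : F :=
  \sum_(i < m.+1) ((t : K) ^+ i) *: a i.+2 (y, h) + ((t : K) ^+ m) *: R (y, (h, t)).

Lemma expansion2 y h (t : KM) : setV1 c U (y, (h, t)) ->
  f (y + (t : K) *: h) = a 0 (y, h) + (t : K) *: a 1 (y, h) + ((t : K) ^+ 2) *: tail2 y h t.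
Proof.
move=> Vp; rewrite (hexp Vp) /= 2!big_ord_recl /tail2 scalerDr scaler_sumr expr0 scale1r expr1.
rewrite -!addrA; congr (_ + (_ + (_ + _))); last by rewrite scalerA -exprD add2n.
by apply: eq_bigr => i _; rewrite scalerA -exprD add2n.
Qed.

Lemma a0_eq x h : U x -> a 0 (x, h) = f x.
Proof.
move=> Ux; have V0 : setV1 c U (x, (h, (0 : K^o))) by split=> //=; rewrite scale0r addr0.
by have := expansion2 V0; rewrite !scale0r addr0 expr2 mul0r scale0r !addr0 => ->.
Qed.

Lemma tail2_at0 y h : U y -> tail2 y h 0 = a 2 (y, h).
Proof.
move=> Uy; rewrite /tail2 big_ord_recl expr0 scale1r big1 => [|i _]; last first.
  by rewrite exprS mul0r scale0r.
by case: m => [|n]; rewrite ?expr0 ?scale1r ?hR0 ?exprS ?mul0r ?scale0r // !addr0.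
Qed.

Lemma c0_tail2 V phi psi chi : C0 KM E V phi -> C0 KM E V psi -> C0 KM KM V chi ->
  (forall t, V t -> setV1 c U (phi t, (psi t, chi t))) ->
  C0 KM F V (fun t => tail2 (phi t) (psi t) (chi t)).
Proof.
move=> c1 c2 c3 inV1; have oV := c0_open inM_K hE c1.
apply: c0_add inM_K hF _ (c0_scale inM_K hF (c0_exp _ inM_K oV c3) (c0_curve hE hF hR c1 c2 c3 inV1)).
apply: (c0_sum inM_K hF oV) => i; apply: (c0_scale inM_K hF (c0_exp _ inM_K oV c3)).
have ca := isCk_C0 (ha (ltn_ord i : (i.+2 <= m.+2)%N)).
exact: (c0_curve2 hE hF ca c1 c2 (fun t Vt => (inV1 t Vt).1)).
Qed.

Lemma a1_eq_dq g1 x h : U x -> is_dq c U f g1 -> a 1 (x, h) = g1 (x, (h, (0 : K^o))).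
Proof.
move=> Ux [cg1 dg1].
pose V := fun t : KM => U ((t : K) *: h + x).
have oV : opn KM V := open_line h x hE oU.
have inV1 t : V t -> setV1 c U (x, (h, t)) by move=> Vt; split=> //=; rewrite addrC.
have cx := c0_const x inM_K hE oV; have ch := c0_const h inM_K hE oV.
have ct := c0_id inM_K oV.
have cR := c0_add inM_K hF (c0_const (a 1 (x, h)) inM_K hF oV)
                            (c0_scale inM_K hF ct (c0_tail2 cx ch ct inV1)).
have /= := eq0_of_units hF cR (c0_curve hE hF cg1 cx ch ct inV1).
rewrite scale0r addr0; apply; first by rewrite /V scale0r add0r.
move=> t Vt _; rewrite -(dg1 _ (inV1 t Vt)) /= (expansion2 (inV1 t Vt)) a0_eq //.
by rewrite scalerDr scalerA -expr2 -[f x + _ + _]addrA (addrC (f x)) addrK.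
Qed.

Lemma a1_dd x h : U x -> a 1 (x, h) = dd c U f x h.
Proof.
move=> Ux; have [_ [g1 [dg1 _]]] := hf.
by apply: a1_eq_dq => //; apply: dq_spec; exists g1.
Qed.

Lemma a1_linear x : U x -> is_linear (fun h => a 1 (x, h)).
Proof.
move=> Ux r h1 h2; have [_ [g1 [dg1 _]]] := hf.
by rewrite /= !(a1_eq_dq _ Ux dg1) (dq_at0_linear _ _ _ Ux dg1).
Qed.

Lemma a2_homogeneous x (r : K) h : U x -> a 2 (x, r *: h) = r ^+ 2 *: a 2 (x, h).
Proof.
move=> Ux.
pose V := fun t : KM => U ((t : K) *: (r *: h) + x).
have oV : opn KM V := open_line (r *: h) x hE oU.
have inV_rh t : V t -> setV1 c U (x, (r *: h, t)) by move=> Vt; split=> //=; rewrite addrC.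
have inV_h t : V t -> setV1 c U (x, (h, ((t : K) * r : K^o))).
  by move=> Vt; split=> //=; rewrite -scalerA addrC.
have cx := c0_const x inM_K hE oV; have ct := c0_id inM_K oV.
have cr := @c0_const KM KM V r inM_K inM_K oV.
have ctr : C0 KM KM V (fun t => ((t : K) * r : K^o)) := c0_scale inM_K inM_K ct cr.
have cL := c0_tail2 cx (c0_const (r *: h) inM_K hE oV) ct inV_rh.
have cR := c0_scale inM_K hF (@c0_const KM KM V (r ^+ 2) inM_K inM_K oV)
                              (c0_tail2 cx (c0_const h inM_K hE oV) ctr inV_h).
have /= := eq0_of_units hF cL cR; rewrite mul0r !tail2_at0 //; apply.
  by rewrite /V scale0r add0r.
move=> t Vt ut; apply: (unit_scaleI ut); rewrite !scalerA mulrA -expr2 -exprMn.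
have := expansion2 (inV_rh t Vt); rewrite /= scalerA (expansion2 (inV_h t Vt)) !a0_eq //.
by rewrite (is_linearZ (a1_linear Ux)) scalerA => /addrI.
Qed.

Lemma a2_polar_dq x h1 h2 G1 : U x -> is_dq c U (fun y => a 1 (y, h2)) G1 ->
  polar (fun h => a 2 (x, h)) h1 h2 = G1 (x, (h1, (0 : K^o))).
Proof.
move=> Ux [cG1 dG1].
pose V := fun t : KM => U ((t : K) *: h1 + x) /\ U ((t : K) *: (h1 + h2) + x).
have oV : opn KM V := open_inter inM_K (open_line h1 x hE oU) (open_line _ x hE oU).
have inV_sum t : V t -> setV1 c U (x, (h1 + h2, t)).
  by move=> Vt; split=> //=; rewrite addrC; exact: Vt.2.
have inV_h1 t : V t -> setV1 c U (x, (h1, t)).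
  by move=> Vt; split=> //=; rewrite addrC; exact: Vt.1.
have inV_h2 t : V t -> setV1 c U ((t : K) *: h1 + x, (h2, t)).
  by move=> Vt; split=> /=; [exact: Vt.1 | rewrite -addrA (addrC x) addrA -scalerDr; exact: Vt.2].
have cx := c0_const x inM_K hE oV; have ct := c0_id inM_K oV.
have ch1 := c0_const h1 inM_K hE oV.
have cline := c0_restr inM_K hE oV (fun _ _ => I) (c0_line h1 x hE).
have cL := c0_tail2 cx (c0_const (h1 + h2) inM_K hE oV) ct inV_sum.
have cR := c0_add inM_K hF (c0_add inM_K hF (c0_tail2 cx ch1 ct inV_h1)
                                          (c0_curve hE hF cG1 cx ch1 ct inV_h1))
                  (c0_tail2 cline (c0_const h2 inM_K hE oV) ct inV_h2).
have V0 : V 0 by rewrite /V !scale0r !add0r.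
have := eq0_of_units hF cL cR V0; rewrite /= scale0r add0r !tail2_at0 // => e0.
rewrite /polar e0; first by rewrite addrAC addrK (addrC (a 2 (x, h1))) addrK.
move=> t Vt ut; apply: (unit_scaleI ut); rewrite !scalerA -expr2 (addrC (t *: h1) x).
have e12 := expansion2 (inV_sum t Vt); have e1 := expansion2 (inV_h1 t Vt).
have e2 := expansion2 (inV_h2 t Vt); have eG := dG1 _ (inV_h1 t Vt).
have shift : (t : K) *: h1 + x + (t : K) *: h2 = x + (t : K) *: (h1 + h2).
  by rewrite scalerDr addrA (addrC x).
rewrite /= in e12 e1 e2 eG; rewrite shift a0_eq in e2; last exact: Vt.1.
rewrite (addrC _ x) e1 -(subrK (a 1 (x, h2)) (a 1 (x + t *: h1, h2))) eG in e2.
rewrite e2 !a0_eq // (is_linearD (a1_linear Ux)) in e12.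
rewrite 2![in RHS]scalerDr; apply: (addrI (f x + t *: (a 1 (x, h1) + a 1 (x, h2)))).
rewrite -e12 [t *: (a 1 _ + _)]scalerDr [t *: (t *: _ + _)]scalerDr scalerA -expr2 -!addrA.
by congr (_ + (_ + _)); rewrite [RHS]addrCA (addrCA (t *: a 1 (x, h2))).
Qed.

Lemma exists_dq_a1 h2 : exists G1, is_dq c U (fun y => a 1 (y, h2)) G1.
Proof.
have := ha (isT : (1 <= m.+2)%N); rewrite subn1 => -[_ [A1 [dA1 _]]].
by eexists; exact: is_dq_partial1 dA1.
Qed.

Lemma a2_polar_linear x h2 : U x -> is_linear (fun h1 => polar (fun h => a 2 (x, h)) h1 h2).
Proof.
move=> Ux r u v; have [G1 dG1] := exists_dq_a1 h2.
by rewrite /= !(a2_polar_dq _ Ux dG1) (dq_at0_linear _ _ _ Ux dG1).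
Qed.

Lemma a2_polar_dd2 x h1 h2 : U x -> polar (fun h => a 2 (x, h)) h1 h2 = dd2 c U f x h1 h2.
Proof.
move=> Ux; have [G1 dG1] := exists_dq_a1 h2.
have ddG1 : is_dq c U (fun y => dd c U f y h2) G1 := is_dq_ext (fun y Uy => a1_dd h2 Uy) dG1.
rewrite (a2_polar_dq _ Ux dG1).
exact: dq_at0_unique Ux ddG1 (dq_spec (ex_intro _ G1 ddG1)).
Qed.

Lemma second_order_coefficients x : U x ->
  [/\ forall h, a 0 (x, h) = f x,
      forall h, a 1 (x, h) = dd c U f x h,
      is_linear (fun h => a 1 (x, h)),
      is_quadratic_form (fun h => a 2 (x, h)) &
      forall h1 h2, polar (fun h => a 2 (x, h)) h1 h2 = dd2 c U f x h1 h2].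
Proof.
move=> Ux; split=> [h|h|||h1 h2]; [exact: a0_eq | exact: a1_dd | exact: a1_linear | | ].
  by apply: is_quadratic_formP => [t h|h2]; [exact: a2_homogeneous | exact: a2_polar_linear].
exact: a2_polar_dd2.
Qed.

End SecondOrderExpansion.
End DifferenceQuotient.
End Concept.
Unset Implicit Arguments. Set Strict Implicit.

Theorem proposition5p3 (K : comPzRingType) (topK : pset (pset K))
  (c : C0concept topK) (E F : Mod K) (hE : inM c E) (hF : inM c F)
  (U : pset E) (hU : opn E U) (k : nat) (hk : (2 <= k)%N)
  (f : E -> F) (hf : isCk c k U f)
  (a : nat -> pM c E E -> F) (R : M1 c E -> F)
  (ha : forall j : nat, (j <= k)%N ->
          isCk c (k - j) (fun p : pM c E E => U p.1) (a j))
  (hR : isC0 c (M1 c E) F (setV1 c U) R)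
  (hR0 : forall (x h : E), U x -> R (x, (h, (0 : K^o))) = 0)
  (hexp : forall p : M1 c E, setV1 c U p ->
     f (p.1 + (p.2.2 : K) *: p.2.1) =
       \sum_(j < k.+1) ((p.2.2 : K) ^+ j) *: a j (p.1, p.2.1)
       + ((p.2.2 : K) ^+ k) *: R p) :
  forall x : E, U x ->
    (forall h : E, a 0%N (x, h) = f x) /\
    (forall h : E, a 1%N (x, h) = dd c U f x h) /\
    is_linear (fun h : E => a 1%N (x, h)) /\
    is_quadratic_form (fun h : E => a 2%N (x, h)) /\
    (forall h1 h2 : E,
       a 2%N (x, h1 + h2) - a 2%N (x, h1) - a 2%N (x, h2) = dd2 c U f x h1 h2) /\
    (forall h : E, a 2%N (x, h) *+ 2 = dd2 c U f x h h).
Proof.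
move=> x Ux; case: k hk hf ha hexp => [|[|m]] // _ hf ha hexp.
have [a0 a1 a1_lin a2_quad a2_polar] :=
  second_order_coefficients hE hF hU hf ha hR hR0 hexp Ux.
do 4!split=> //; split=> [//|h].
by rewrite -a2_polar polar_diag //; case: a2_quad.
Qed.
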